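(* Let $\Phi$ be a Young function such that the limits $p_0=\lim_{t\to0^+}\frac{t\Phi'(t)}{\Phi(t)}$ and $p_\infty=\lim_{t\to\infty}\frac{t\Phi'(t)}{\Phi(t)}$ exist as finite real numbers. Let $p=\max\{p_0,p_\infty\}$ and $q=\min\{p_0,p_\infty\}$. Then for every $\varepsilon>0$ there exists a Young function $\Psi$ equivalent to $\Phi$ with $p\le p_\Psi<p+\varepsilon$ and $q-\varepsilon<q_\Psi\le q$.
   Context: A Young function is a convex function $\Phi:[0,\infty)\to[0,\infty)$ with $\Phi(0)=0$, $\Phi(t)>0$ for $t>0$, and $\lim_{t\to\infty}\Phi(t)=\infty$. $\Phi'$ denotes the right derivative of $\Phi$. The Lebesgue exponents of $\Phi$ are $p_\Phi=\sup_{t>0}\frac{t\Phi'(t)}{\Phi(t)}$ and $q_\Phi=\inf_{t>0}\frac{t\Phi'(t)}{\Phi(t)}$. Two Young functions $\Phi,\Psi$ are equivalent if there is $C\ge1$ with $C^{-1}\Psi(t)\le\Phi(t)\le C\Psi(t)$ for all $t\ge0$. *)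

From Stdlib Require Import Reals.
From Coquelicot Require Import Coquelicot.
Open Scope R_scope.

Definition is_right_deriv (Phi : R -> R) (t l : R) : Prop :=
  filterlim (fun h => (Phi (t + h) - Phi t) / h) (at_right 0) (locally l).

(* Young function on [0,oo) (values of Phi on negative reals are irrelevant). *)
Definition young (Phi : R -> R) : Prop :=
  (forall x y lam, 0 <= x -> 0 <= y -> 0 <= lam <= 1 ->
     Phi (lam * x + (1 - lam) * y) <= lam * Phi x + (1 - lam) * Phi y)
  /\ Phi 0 = 0
  /\ (forall t, 0 < t -> 0 < Phi t)
  /\ filterlim Phi (Rbar_locally p_infty) (Rbar_locally p_infty).

Definition lquot (Phi dPhi : R -> R) (t : R) : R := t * dPhi t / Phi t.

Definition p_exp (Phi dPhi : R -> R) : Rbar :=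
  Lub_Rbar (fun x => exists t, 0 < t /\ x = lquot Phi dPhi t).
Definition q_exp (Phi dPhi : R -> R) : Rbar :=
  Glb_Rbar (fun x => exists t, 0 < t /\ x = lquot Phi dPhi t).

Definition young_equiv (Phi Psi : R -> R) : Prop :=
  exists C, 1 <= C /\
    forall t, 0 <= t -> / C * Psi t <= Phi t /\ Phi t <= C * Psi t.

(* Fix [eta = eps / 2] and [d0, M > 0] such that the quotient [t Phi'(t) / Phi(t)] is within
   [eta] of [p0] on [(0, d0)] and of [pinf] on [[M, oo)].  If the quotient at [M] is at most
   [1], convexity forces [Phi] to be linear on [[0, M]] and [Psi = Phi] already works.
   Otherwise, with [c = max p0 pinf + eta], keep [Phi] beyond [M], use its tangent line at [M]
   down to the point where that line is tangent to a power [t ^ c], use this power down to a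
   small [delta], and rescale [Phi] on [[0, delta]] to meet it.  The derivative only jumps
   upwards at the junctions, so the result is convex; on the power its quotient is [c], on the
   line it is [t / (t - r)], which decreases from [c] to the quotient of [Phi] at [M].  The new
   function is proportional to [Phi] near [0] and equal to it near infinity, hence equivalent,
   and its quotient has the same limits [p0] and [pinf]; these limits and the bounds
   [min p0 pinf - eta <= quotient <= max p0 pinf + eta] pin down the Lebesgue exponents. *)

From Stdlib Require Import Reals Lra Psatz.
From Coquelicot Require Import Coquelicot.
Open Scope R_scope.

Lemma filterlim_locally_Rabs {T : Type} (F : (T -> Prop) -> Prop) (f : T -> R) (l : R) :
  Filter F ->
  filterlim f F (locally l) <-> forall eps, 0 < eps -> F (fun x => Rabs (f x - l) < eps).
Proof.
  intros FF. rewrite filterlim_locally. split.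
  - intros H eps Heps. exact (H (mkposreal eps Heps)).
  - intros H eps. exact (H eps (cond_pos eps)).
Qed.

Lemma at_right_0_intro (P : R -> Prop) (d : R) :
  0 < d -> (forall h, 0 < h < d -> P h) -> at_right 0 P.
Proof.
  intros Hd H. exists (mkposreal d Hd). intros h Hh Hh0. apply H.
  change (Rabs (h - 0) < d) in Hh. rewrite Rminus_0_r in Hh.
  apply Rabs_lt_between in Hh. lra.
Qed.

Lemma at_right_0_elim (P : R -> Prop) :
  at_right 0 P -> exists d, 0 < d /\ forall h, 0 < h < d -> P h.
Proof.
  intros [d Hd]. exists d. split; [apply cond_pos|]. intros h Hh. apply Hd; [|lra].
  change (Rabs (h - 0) < d). rewrite Rminus_0_r, Rabs_pos_eq; lra.
Qed.

Lemma young_equiv_refl (Phi : R -> R) : young Phi -> young_equiv Phi Phi.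
Proof.
  intros [_ [H0 [Hpos _]]]. exists 1. split; [lra|]. intros t Ht.
  assert (0 <= Phi t) by (destruct (Req_dec t 0); [subst; lra|apply Rlt_le, Hpos; lra]).
  rewrite Rinv_1. lra.
Qed.

(** * Convexity through slopes *)

Definition convex_from (f : R -> R) (a : R) : Prop :=
  forall x y z, a <= x -> x < y -> y < z ->
    (f y - f x) * (z - y) <= (f z - f y) * (y - x).

Lemma convex_from_mono (f : R -> R) (a a' : R) :
  a <= a' -> convex_from f a -> convex_from f a'.
Proof. intros Ha Hf x y z Hx. apply Hf. lra. Qed.

Lemma convex_from_scal (f : R -> R) (a K : R) :
  0 <= K -> convex_from f a -> convex_from (fun s => K * f s) a.
Proof.
  intros HK Hf x y z Hx Hxy Hyz. specialize (Hf x y z Hx Hxy Hyz).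
  replace ((K * f y - K * f x) * (z - y)) with (K * ((f y - f x) * (z - y))) by ring.
  replace ((K * f z - K * f y) * (y - x)) with (K * ((f z - f y) * (y - x))) by ring.
  apply Rmult_le_compat_l; assumption.
Qed.

Lemma convex_from_affine (a b m : R) : convex_from (fun s => a + b * (s - m)) 0.
Proof. intros x y z _ _ _. right. ring. Qed.

Lemma convex_from_Rpower (a c : R) :
  0 < a -> 1 <= c -> convex_from (fun s => Rpower s c) a.
Proof.
  intros Ha Hc x y z Hx Hxy Hyz. cbv beta.
  assert (Hder : forall r, 0 < r -> derivable_pt_lim (fun s => Rpower s c) r (c * Rpower r (c - 1)))
    by (intros r Hr; apply derivable_pt_lim_power; exact Hr).
  destruct (MVT_cor2 (fun s => Rpower s c) (fun r => c * Rpower r (c - 1)) x y Hxy) as [u [-> Hu]]; [intros r Hr; apply Hder; lra|].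
  destruct (MVT_cor2 (fun s => Rpower s c) (fun r => c * Rpower r (c - 1)) y z Hyz) as [w [-> Hw]]; [intros r Hr; apply Hder; lra|].
  assert (Huw : Rpower u (c - 1) <= Rpower w (c - 1)) by (apply Rle_Rpower_l; lra).
  assert (0 < Rpower u (c - 1)) by apply exp_pos.
  assert (Hxyz : 0 <= (y - x) * (z - y)) by nra.
  assert (Hcu : c * Rpower u (c - 1) <= c * Rpower w (c - 1)) by nra.
  replace (c * Rpower u (c - 1) * (y - x) * (z - y)) with (c * Rpower u (c - 1) * ((y - x) * (z - y))) by ring.
  replace (c * Rpower w (c - 1) * (z - y) * (y - x)) with (c * Rpower w (c - 1) * ((y - x) * (z - y))) by ring.
  apply Rmult_le_compat_r; assumption.
Qed.

Lemma Rdiv_le_cross (a b u w : R) : 0 < u -> 0 < w -> a * w <= b * u -> a / u <= b / w.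
Proof.
  intros Hu Hw H.
  replace (a / u) with (a * w * / (u * w)) by (field; lra).
  replace (b / w) with (b * u * / (u * w)) by (field; lra).
  apply Rmult_le_compat_r; [apply Rlt_le, Rinv_0_lt_compat, Rmult_lt_0_compat|]; assumption.
Qed.

Lemma convex_from_of_convex (f : R -> R) :
  (forall x y lam, 0 <= x -> 0 <= y -> 0 <= lam <= 1 ->
     f (lam * x + (1 - lam) * y) <= lam * f x + (1 - lam) * f y) ->
  convex_from f 0.
Proof.
  intros Hf x y z Hx Hxy Hyz.
  set (lam := (z - y) / (z - x)).
  assert (Hlam : 0 <= lam <= 1).
  { unfold lam. split.
    - apply Rmult_le_pos; [lra|]. apply Rlt_le, Rinv_0_lt_compat; lra.
    - apply Rle_div_l; lra. }
  specialize (Hf x z lam Hx ltac:(lra) Hlam).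
  replace (lam * x + (1 - lam) * z) with y in Hf by (unfold lam; field; lra).
  assert (E1 : lam * (z - x) = z - y) by (unfold lam; field; lra).
  assert (E2 : (1 - lam) * (z - x) = y - x) by (unfold lam; field; lra).
  assert (Hf' : f y * (z - x) <= lam * (z - x) * f x + (1 - lam) * (z - x) * f z).
  { replace (lam * (z - x) * f x + (1 - lam) * (z - x) * f z)
      with ((lam * f x + (1 - lam) * f z) * (z - x)) by ring.
    apply Rmult_le_compat_r; lra. }
  rewrite E1, E2 in Hf'. nra.
Qed.

Lemma convex_of_convex_from (f : R -> R) :
  convex_from f 0 ->
  forall x y lam, 0 <= x -> 0 <= y -> 0 <= lam <= 1 ->
    f (lam * x + (1 - lam) * y) <= lam * f x + (1 - lam) * f y.
Proof.
  intros Hf.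
  assert (Hlt : forall x y lam, 0 <= x -> x < y -> 0 < lam < 1 ->
     f (lam * x + (1 - lam) * y) <= lam * f x + (1 - lam) * f y).
  { intros x y lam Hx Hxy Hlam. set (z := lam * x + (1 - lam) * y).
    specialize (Hf x z y Hx ltac:(unfold z; nra) ltac:(unfold z; nra)).
    replace (y - z) with (lam * (y - x)) in Hf by (unfold z; ring).
    replace (z - x) with ((1 - lam) * (y - x)) in Hf by (unfold z; ring).
    assert ((f z - f x) * lam <= (f y - f z) * (1 - lam)).
    { apply (Rmult_le_reg_r (y - x)); [lra|]. nra. }
    nra. }
  intros x y lam Hx Hy Hlam.
  destruct (Req_dec lam 0) as [->|Hlam0].
  { replace (0 * x + (1 - 0) * y) with y by ring. lra. }
  destruct (Req_dec lam 1) as [->|Hlam1].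
  { replace (1 * x + (1 - 1) * y) with x by ring. lra. }
  destruct (Rtotal_order x y) as [Hxy|[<-|Hxy]].
  - apply Hlt; lra.
  - replace (lam * x + (1 - lam) * x) with x by ring. lra.
  - replace (lam * x + (1 - lam) * y) with ((1 - lam) * y + (1 - (1 - lam)) * x) by ring.
    specialize (Hlt y x (1 - lam) Hy Hxy ltac:(lra)). lra.
Qed.

Lemma young_nondecreasing (Phi : R -> R) :
  young Phi -> forall x y, 0 <= x <= y -> Phi x <= Phi y.
Proof.
  intros [Hconv [H0 [Hpos _]]] x y Hxy.
  destruct (Req_dec y 0) as [Hy|Hy]; [replace x with y by lra; lra|].
  assert (Hlam : 0 <= x / y <= 1).
  { split; [apply Rmult_le_pos; [lra|apply Rlt_le, Rinv_0_lt_compat; lra]|].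
    apply Rle_div_l; lra. }
  specialize (Hconv y 0 (x / y) ltac:(lra) ltac:(lra) Hlam).
  replace (x / y * y + (1 - x / y) * 0) with x in Hconv by (field; lra).
  rewrite H0 in Hconv. assert (0 < Phi y) by (apply Hpos; lra). nra.
Qed.

Lemma is_right_deriv_unique (f : R -> R) (t D1 D2 : R) :
  is_right_deriv f t D1 -> is_right_deriv f t D2 -> D1 = D2.
Proof.
  intros H1 H2.
  apply (filterlim_locally_unique (K := R_AbsRing) (V := R_NormedModule) _ _ _
    (FF := Proper_StrongProper _ (at_right_proper_filter 0)) H1 H2).
Qed.

Lemma is_right_deriv_of_derivable_pt_lim (f : R -> R) (t l : R) :
  derivable_pt_lim f t l -> is_right_deriv f t l.
Proof.
  intros H. apply (filterlim_locally_Rabs _ _ _ _). intros eps Heps.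
  destruct (H eps Heps) as [d Hd].
  apply (at_right_0_intro _ d (cond_pos d)). intros h Hh.
  apply Hd; [lra|]. rewrite Rabs_pos_eq; lra.
Qed.

Lemma is_right_deriv_scal (f : R -> R) (t D K : R) :
  is_right_deriv f t D -> is_right_deriv (fun s => K * f s) t (K * D).
Proof.
  intros H. unfold is_right_deriv.
  apply (filterlim_ext (fun h => K * ((f (t + h) - f t) / h))).
  { intros h. destruct (Req_dec h 0) as [->|Hh].
    - unfold Rdiv. rewrite Rinv_0. ring.
    - field. exact Hh. }
  eapply filterlim_comp; [exact H|exact (filterlim_scal_r (V := R_NormedModule) K D)].
Qed.

Lemma is_right_deriv_ext_loc (f g : R -> R) (t D d : R) :
  0 < d -> (forall h, 0 <= h < d -> f (t + h) = g (t + h)) ->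
  is_right_deriv f t D -> is_right_deriv g t D.
Proof.
  intros Hd E H. apply (filterlim_ext_loc (fun h => (f (t + h) - f t) / h)); [|exact H].
  apply (at_right_0_intro _ d Hd). intros h Hh.
  rewrite E by lra. replace t with (t + 0) at 2 4 by ring. rewrite E by lra. reflexivity.
Qed.

Lemma is_right_deriv_affine (a b m t : R) : is_right_deriv (fun s => a + b * (s - m)) t b.
Proof.
  apply is_right_deriv_of_derivable_pt_lim, is_derive_Reals.
  auto_derive; [exact I|ring].
Qed.

Lemma is_right_deriv_Rpower (A c t : R) :
  0 < t -> is_right_deriv (fun s => A * Rpower s c) t (A * (c * Rpower t (c - 1))).
Proof.
  intros Ht. apply is_right_deriv_scal, is_right_deriv_of_derivable_pt_lim.
  apply derivable_pt_lim_power, Ht.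
Qed.

Lemma chord_le_right_deriv (f : R -> R) (a x b D : R) :
  convex_from f a -> a <= x < b -> is_right_deriv f b D -> f b - f x <= D * (b - x).
Proof.
  intros Hf Hx HD. apply Rle_div_l; [lra|].
  change (Rbar_le ((f b - f x) / (b - x)) D).
  apply (filterlim_le (F := at_right 0) (fun _ => (f b - f x) / (b - x))
           (fun h => (f (b + h) - f b) / h)); [| apply filterlim_const | exact HD].
  apply (at_right_0_intro _ 1); [lra|]. intros h Hh.
  apply Rdiv_le_cross; try lra.
  specialize (Hf x b (b + h) ltac:(lra) ltac:(lra) ltac:(lra)).
  replace (b + h - b) with h in Hf by ring. lra.
Qed.

Lemma right_deriv_le_chord (f : R -> R) (a b z D : R) :
  convex_from f a -> a <= b < z -> is_right_deriv f b D -> D * (z - b) <= f z - f b.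
Proof.
  intros Hf Hb HD. apply Rle_div_r; [lra|].
  change (Rbar_le D ((f z - f b) / (z - b))).
  apply (filterlim_le (F := at_right 0) (fun h => (f (b + h) - f b) / h)
           (fun _ => (f z - f b) / (z - b))); [| exact HD | apply filterlim_const].
  apply (at_right_0_intro _ (z - b)); [lra|]. intros h Hh.
  apply Rdiv_le_cross; try lra.
  specialize (Hf b (b + h) z ltac:(lra) ltac:(lra) ltac:(lra)).
  replace (b + h - b) with h in Hf by ring. lra.
Qed.

Definition glue (f g : R -> R) (b : R) : R -> R :=
  fun t => if Rlt_dec t b then f t else g t.

Lemma glue_lt (f g : R -> R) (b t : R) : t < b -> glue f g b t = f t.
Proof. intros H. unfold glue. destruct (Rlt_dec t b); [reflexivity|contradiction]. Qed.

Lemma glue_ge (f g : R -> R) (b t : R) : b <= t -> glue f g b t = g t.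
Proof. intros H. unfold glue. destruct (Rlt_dec t b); [lra|reflexivity]. Qed.

Lemma glue_le (f g : R -> R) (b t : R) : f b = g b -> t <= b -> glue f g b t = f t.
Proof.
  intros E H. destruct (Rlt_dec t b) as [Hlt|Hge]; [apply glue_lt, Hlt|].
  replace t with b by lra. rewrite glue_ge by lra. symmetry. exact E.
Qed.

Lemma is_right_deriv_glue (f g df dg : R -> R) (b t : R) :
  (t < b -> is_right_deriv f t (df t)) -> (b <= t -> is_right_deriv g t (dg t)) ->
  is_right_deriv (glue f g b) t (glue df dg b t).
Proof.
  intros Hf Hg. destruct (Rlt_dec t b) as [Hlt|Hge].
  - rewrite glue_lt by exact Hlt.
    apply (is_right_deriv_ext_loc f _ t _ (b - t)); [lra| |exact (Hf Hlt)].
    intros h Hh. rewrite glue_lt by lra. reflexivity.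
  - rewrite glue_ge by lra.
    apply (is_right_deriv_ext_loc g _ t _ 1); [lra| |apply Hg; lra].
    intros h Hh. rewrite glue_ge by lra. reflexivity.
Qed.

(* Chords ending at [b] have slope at most [D1], chords starting at [b] at least [D2]. *)
Lemma convex_from_glue (f g : R -> R) (a b D1 D2 : R) :
  a < b -> convex_from f a -> convex_from g b -> f b = g b ->
  is_right_deriv f b D1 -> is_right_deriv g b D2 -> D1 <= D2 ->
  convex_from (glue f g b) a.
Proof.
  intros Hab Hf Hg E HD1 HD2 HD.
  assert (Hkink : forall x z, a <= x < b -> b < z ->
            (f b - f x) * (z - b) <= (g z - g b) * (b - x)).
  { intros x z Hx Hz.
    assert (L := chord_le_right_deriv f a x b D1 Hf Hx HD1).
    assert (R := right_deriv_le_chord g b b z D2 Hg ltac:(lra) HD2).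
    apply (Rle_trans _ (D1 * (b - x) * (z - b))); [apply Rmult_le_compat_r; lra|].
    apply (Rle_trans _ (D2 * (z - b) * (b - x))); [|apply Rmult_le_compat_r; lra].
    replace (D2 * (z - b) * (b - x)) with (D2 * (b - x) * (z - b)) by ring.
    apply Rmult_le_compat_r; [lra|]. apply Rmult_le_compat_r; lra. }
  intros x y z Hx Hxy Hyz.
  destruct (Rle_dec z b) as [Hzb|Hzb].
  { rewrite !glue_le by (auto; lra). apply Hf; lra. }
  destruct (Rle_dec b x) as [Hbx|Hbx].
  { rewrite !glue_ge by lra. apply Hg; lra. }
  rewrite (glue_lt f g b x), (glue_ge f g b z) by lra.
  destruct (Rle_dec y b) as [Hyb|Hyb].
  - rewrite glue_le by (auto; lra).
    destruct (Req_dec y b) as [->|Hyb'].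
    { rewrite E. rewrite <- E at 1. apply Hkink; lra. }
    assert (H1 := Hf x y b Hx Hxy ltac:(lra)).
    assert (H2 := Hkink y z ltac:(lra) ltac:(lra)).
    apply (Rmult_le_reg_r (b - y)); [lra|].
    assert ((f y - f x) * (b - y) * (z - y) <= (f b - f y) * (y - x) * (z - y))
      by (apply Rmult_le_compat_r; lra).
    assert ((f b - f y) * (z - b) * (y - x) <= (g z - g b) * (b - y) * (y - x))
      by (apply Rmult_le_compat_r; lra).
    rewrite E in *. nra.
  - rewrite glue_ge by lra.
    assert (H1 := Hg b y z ltac:(lra) ltac:(lra) ltac:(lra)).
    assert (H2 := Hkink x y ltac:(lra) ltac:(lra)).
    apply (Rmult_le_reg_r (y - b)); [lra|].
    assert ((g y - g b) * (z - y) * (y - x) <= (g z - g y) * (y - b) * (y - x))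
      by (apply Rmult_le_compat_r; lra).
    assert ((f b - f x) * (y - b) * (z - y) <= (g y - g b) * (b - x) * (z - y))
      by (apply Rmult_le_compat_r; lra).
    rewrite E in *. nra.
Qed.

(** * Lebesgue exponents *)

Section Exponents.
Variable g : R -> R.
Let values (x : R) : Prop := exists t, 0 < t /\ x = g t.

Lemma Lub_values_ge_lim (F : (R -> Prop) -> Prop) (l : R) :
  ProperFilter F -> F (fun t => 0 < t) -> filterlim g F (locally l) ->
  Rbar_le l (Lub_Rbar values).
Proof.
  intros FF Hpos Hg. destruct (Lub_Rbar_correct values) as [Hub _].
  destruct (Lub_Rbar values) as [L| |] eqn:EL; [|exact I|].
  - change (Rbar_le l L).
    apply (filterlim_le (F := F) g (fun _ => L)); [|exact Hg|apply filterlim_const].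
    apply (filter_imp _ _ (fun t Ht => Hub (g t) (ex_intro _ t (conj Ht eq_refl))) Hpos).
  - destruct (filter_ex _ Hpos) as [t Ht].
    exact (Hub (g t) (ex_intro _ t (conj Ht eq_refl))).
Qed.

Lemma Glb_values_le_lim (F : (R -> Prop) -> Prop) (l : R) :
  ProperFilter F -> F (fun t => 0 < t) -> filterlim g F (locally l) ->
  Rbar_le (Glb_Rbar values) l.
Proof.
  intros FF Hpos Hg. destruct (Glb_Rbar_correct values) as [Hlb _].
  destruct (Glb_Rbar values) as [L| |] eqn:EL; [| |exact I].
  - change (Rbar_le L l).
    apply (filterlim_le (F := F) (fun _ => L) g); [|apply filterlim_const|exact Hg].
    apply (filter_imp _ _ (fun t Ht => Hlb (g t) (ex_intro _ t (conj Ht eq_refl))) Hpos).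
  - destruct (filter_ex _ Hpos) as [t Ht].
    exact (Hlb (g t) (ex_intro _ t (conj Ht eq_refl))).
Qed.

Lemma Lub_values_le (b : R) : (forall t, 0 < t -> g t <= b) -> Rbar_le (Lub_Rbar values) b.
Proof.
  intros H. apply (proj2 (Lub_Rbar_correct values)).
  intros x [t [Ht ->]]. exact (H t Ht).
Qed.

Lemma Glb_values_ge (b : R) : (forall t, 0 < t -> b <= g t) -> Rbar_le b (Glb_Rbar values).
Proof.
  intros H. apply (proj2 (Glb_Rbar_correct values)).
  intros x [t [Ht ->]]. exact (H t Ht).
Qed.

End Exponents.

Lemma exponent_bounds (Psi dPsi : R -> R) (p0 pinf eta eps : R) :
  0 < eta < eps ->
  filterlim (lquot Psi dPsi) (at_right 0) (locally p0) ->
  filterlim (lquot Psi dPsi) (Rbar_locally p_infty) (locally pinf) ->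
  (forall t, 0 < t -> Rmin p0 pinf - eta <= lquot Psi dPsi t <= Rmax p0 pinf + eta) ->
  Rbar_le (Rmax p0 pinf) (p_exp Psi dPsi) /\
  Rbar_lt (p_exp Psi dPsi) (Rmax p0 pinf + eps) /\
  Rbar_lt (Rmin p0 pinf - eps) (q_exp Psi dPsi) /\
  Rbar_le (q_exp Psi dPsi) (Rmin p0 pinf).
Proof.
  intros Heta H0 Hinf Hb.
  assert (Pos0 : at_right 0 (fun t => 0 < t)) by (apply (at_right_0_intro _ 1); [lra|intros h Hh; lra]).
  assert (PosInf : Rbar_locally p_infty (fun t => 0 < t)) by (exists 0; auto).
  unfold p_exp, q_exp. split; [|split; [|split]].
  - apply Rmax_case; [exact (Lub_values_ge_lim _ _ _ _ Pos0 H0)|].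
    exact (Lub_values_ge_lim _ _ _ _ PosInf Hinf).
  - apply (Rbar_le_lt_trans _ (Rmax p0 pinf + eta)); [|simpl; lra].
    apply Lub_values_le. intros t Ht. apply Hb, Ht.
  - apply (Rbar_lt_le_trans _ (Rmin p0 pinf - eta)); [simpl; lra|].
    apply Glb_values_ge. intros t Ht. apply Hb, Ht.
  - apply Rmin_case; [exact (Glb_values_le_lim _ _ _ _ Pos0 H0)|].
    exact (Glb_values_le_lim _ _ _ _ PosInf Hinf).
Qed.

Lemma young_equiv_of_agree (Phi Psi : R -> R) (kappa delta M : R) :
  young Phi -> young Psi -> 0 < kappa -> 0 < delta <= M ->
  (forall t, 0 <= t <= delta -> Psi t = kappa * Phi t) ->
  (forall t, M <= t -> Psi t = Phi t) ->
  young_equiv Phi Psi.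
Proof.
  intros HPhi HPsi Hk Hd Hlow Hhigh.
  assert (Hpos : forall f, young f -> forall t, 0 < t -> 0 < f t)
    by (intros f [_ [_ [Hf _]]]; exact Hf).
  assert (HPhi0 : forall t, 0 <= t -> 0 <= Phi t).
  { intros t Ht. destruct (Req_dec t 0) as [->|Ht0]; [destruct HPhi as [_ [-> _]]; lra|].
    apply Rlt_le, (Hpos _ HPhi); lra. }
  assert (Hpd := Hpos _ HPhi delta (proj1 Hd)). assert (Hsd := Hpos _ HPsi delta (proj1 Hd)).
  set (C := Rmax (Rmax kappa (/ kappa)) (Rmax (Phi M / Phi delta) (Phi M / Psi delta))).
  assert (Ck : kappa <= C) by (eapply Rle_trans; [apply Rmax_l|apply Rmax_l]).
  assert (Cik : / kappa <= C) by (eapply Rle_trans; [apply Rmax_r|apply Rmax_l]).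
  assert (CPhi : Phi M / Phi delta <= C) by (eapply Rle_trans; [apply Rmax_l|apply Rmax_r]).
  assert (CPsi : Phi M / Psi delta <= C) by (eapply Rle_trans; [apply Rmax_r|apply Rmax_r]).
  assert (HdM : Phi delta <= Phi M) by (apply young_nondecreasing; [exact HPhi|lra]).
  assert (C1 : 1 <= C) by (eapply Rle_trans; [|exact CPhi]; apply Rle_div_r; lra).
  exists C. split; [exact C1|]. intros t Ht.
  assert (Bounds : Psi t <= C * Phi t /\ Phi t <= C * Psi t).
  { specialize (HPhi0 t Ht).
    destruct (Rle_dec t delta) as [Htd|Htd].
    { rewrite (Hlow t ltac:(lra)).
      assert (1 <= C * kappa) by (rewrite <- (Rinv_l kappa) by lra; nra). nra. }
    destruct (Rle_dec M t) as [HMt|HMt]; [rewrite Hhigh by exact HMt; nra|].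
    assert (Phi delta <= Phi t <= Phi M) by (split; apply young_nondecreasing; auto; lra).
    assert (Psi delta <= Psi t <= Psi M) by (split; apply young_nondecreasing; auto; lra).
    rewrite (Hhigh M) in * by lra. split.
    - apply (Rle_trans _ (Phi M / Phi delta * Phi delta)).
      + replace (Phi M / Phi delta * Phi delta) with (Phi M) by (field; lra). lra.
      + apply Rmult_le_compat; try lra.
        apply Rmult_le_pos; [lra|apply Rlt_le, Rinv_0_lt_compat; lra].
    - apply (Rle_trans _ (Phi M / Psi delta * Psi delta)).
      + replace (Phi M / Psi delta * Psi delta) with (Phi M) by (field; lra). lra.
      + apply Rmult_le_compat; try lra. apply Rmult_le_pos; [lra|apply Rlt_le, Rinv_0_lt_compat; lra]. }
  split; [|apply Bounds].
  apply (Rmult_le_reg_l C); [lra|]. rewrite <- Rmult_assoc, Rinv_r, Rmult_1_l by lra.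
  apply Bounds.
Qed.

Lemma Rpower_pred_mult (x c : R) : 0 < x -> Rpower x (c - 1) * x = Rpower x c.
Proof.
  intros Hx. rewrite <- (Rpower_1 x) at 2 by exact Hx. rewrite <- Rpower_plus.
  f_equal. ring.
Qed.

(** * The bridge construction *)

Section Bridge.
Variables (Phi dPhi : R -> R) (c M delta : R).
Hypothesis HPhi : young Phi.
Hypothesis HdPhi : forall t, 0 < t -> is_right_deriv Phi t (dPhi t).
Hypothesis HM : 0 < M.
Hypothesis HqM : 1 < lquot Phi dPhi M < c.

Definition tangent_root : R := M - Phi M / dPhi M.
Definition tangency_point : R := c * tangent_root / (c - 1).

Lemma bridge_constants_pos : 0 < Phi M /\ 0 < dPhi M /\ 1 < c.
Proof.
  destruct HPhi as [_ [_ [Hpos _]]]. assert (HPM := Hpos M HM).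
  unfold lquot in HqM. destruct HqM as [H1 H2].
  apply Rlt_div_r in H1; [|lra]. apply Rlt_div_l in H2; [|lra].
  repeat split; nra.
Qed.

Lemma tangency_point_bounds : 0 < tangent_root < tangency_point /\ tangency_point < M.
Proof.
  destruct bridge_constants_pos as [HPM [HD Hc]].
  unfold lquot in HqM. destruct HqM as [H1 H2].
  apply Rlt_div_r in H1; [|lra]. apply Rlt_div_l in H2; [|lra].
  assert (He : tangent_root * dPhi M = M * dPhi M - Phi M) by (unfold tangent_root; field; lra).
  assert (Hv : tangency_point * (c - 1) = c * tangent_root) by (unfold tangency_point; field; lra).
  assert (He0 : 0 < tangent_root) by (apply (Rmult_lt_reg_r (dPhi M)); lra).
  split; [split; [exact He0|]|].
  - apply (Rmult_lt_reg_r (c - 1)); lra.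
  - apply (Rmult_lt_reg_r (c - 1)); [lra|]. rewrite Hv.
    apply (Rmult_lt_reg_r (dPhi M)); [lra|]. nra.
Qed.

Hypothesis Hdelta : 0 < delta < tangency_point.
Hypothesis Hqdelta : lquot Phi dPhi delta <= c.

Definition tangent_line (t : R) : R := Phi M + dPhi M * (t - M).
Definition power_coef : R := dPhi M / (c * Rpower tangency_point (c - 1)).
Definition power_piece (t : R) : R := power_coef * Rpower t c.
Definition dpower_piece (t : R) : R := power_coef * (c * Rpower t (c - 1)).
Definition scale_coef : R := power_piece delta / Phi delta.

Definition upper_part : R -> R := glue tangent_line Phi M.
Definition middle_part : R -> R := glue power_piece upper_part tangency_point.
Definition bridge : R -> R := glue (fun t => scale_coef * Phi t) middle_part delta.
Definition dbridge : R -> R :=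
  glue (fun t => scale_coef * dPhi t)
    (glue dpower_piece (glue (fun _ => dPhi M) dPhi M) tangency_point) delta.

Lemma power_coef_pos : 0 < power_coef.
Proof.
  destruct bridge_constants_pos as [_ [HD Hc]].
  apply Rdiv_lt_0_compat; [exact HD|]. apply Rmult_lt_0_compat; [lra|apply exp_pos].
Qed.

Lemma power_piece_pos (t : R) : 0 < power_piece t.
Proof. apply Rmult_lt_0_compat; [exact power_coef_pos|apply exp_pos]. Qed.

Lemma scale_coef_pos : 0 < scale_coef.
Proof.
  destruct HPhi as [_ [_ [Hpos _]]].
  apply Rdiv_lt_0_compat; [apply power_piece_pos|apply Hpos, Hdelta].
Qed.

Lemma dpower_piece_tangency : dpower_piece tangency_point = dPhi M.
Proof.
  destruct bridge_constants_pos as [_ [HD Hc]].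
  assert (0 < Rpower tangency_point (c - 1)) by apply exp_pos.
  unfold dpower_piece, power_coef. field. split; lra.
Qed.

Lemma power_piece_tangency : power_piece tangency_point = tangent_line tangency_point.
Proof.
  destruct bridge_constants_pos as [HPM [HD Hc]]. destruct tangency_point_bounds as [[He Hev] HvM].
  assert (0 < Rpower tangency_point (c - 1)) by apply exp_pos.
  assert (Hv : tangency_point * (c - 1) = c * tangent_root) by (unfold tangency_point; field; lra).
  unfold power_piece, power_coef, tangent_line.
  rewrite <- (Rpower_pred_mult tangency_point c) by lra.
  replace (Phi M) with (dPhi M * (M - tangent_root)) by (unfold tangent_root; field; lra).
  apply (Rmult_eq_reg_r c); [|lra].
  field_simplify; [|lra]. nra.
Qed.

Lemma scale_coef_delta : scale_coef * Phi delta = power_piece delta.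
Proof.
  destruct HPhi as [_ [_ [Hpos _]]]. assert (0 < Phi delta) by apply Hpos, Hdelta.
  unfold scale_coef. field. lra.
Qed.

Lemma bridge_le_delta (t : R) : t <= delta -> bridge t = scale_coef * Phi t.
Proof.
  intros Ht. unfold bridge. rewrite glue_le; [reflexivity| |exact Ht]. rewrite scale_coef_delta.
  unfold middle_part. rewrite glue_lt; [reflexivity|apply Hdelta].
Qed.

Lemma bridge_power (t : R) : delta <= t < tangency_point -> bridge t = power_piece t.
Proof.
  intros Ht. unfold bridge, middle_part. rewrite glue_ge, glue_lt by lra. reflexivity.
Qed.

Lemma bridge_tangent (t : R) : tangency_point <= t < M -> bridge t = tangent_line t.
Proof.
  intros Ht. unfold bridge, middle_part, upper_part. rewrite !glue_ge, glue_lt by lra.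
  reflexivity.
Qed.

Lemma bridge_above (t : R) : M <= t -> bridge t = Phi t.
Proof.
  destruct tangency_point_bounds as [_ HvM]. intros Ht.
  unfold bridge, middle_part, upper_part. rewrite !glue_ge by lra. reflexivity.
Qed.

Lemma upper_part_right_deriv (t : R) :
  0 < t -> is_right_deriv upper_part t (glue (fun _ => dPhi M) dPhi M t).
Proof.
  intros Ht. apply is_right_deriv_glue; intros _; [apply is_right_deriv_affine|].
  apply HdPhi, Ht.
Qed.

Lemma middle_part_right_deriv (t : R) :
  0 < t -> is_right_deriv middle_part t
             (glue dpower_piece (glue (fun _ => dPhi M) dPhi M) tangency_point t).
Proof.
  destruct tangency_point_bounds as [[He Hev] _]. intros Ht.
  apply is_right_deriv_glue; intros Hvt; [apply is_right_deriv_Rpower, Ht|].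
  apply upper_part_right_deriv. lra.
Qed.

Lemma bridge_right_deriv (t : R) : 0 < t -> is_right_deriv bridge t (dbridge t).
Proof.
  intros Ht. apply is_right_deriv_glue; intros Hdt.
  - apply is_right_deriv_scal, HdPhi, Ht.
  - apply middle_part_right_deriv, Ht.
Qed.

Lemma upper_part_convex : convex_from upper_part tangency_point.
Proof.
  destruct HPhi as [HconvPhi _]. apply convex_from_of_convex in HconvPhi.
  destruct tangency_point_bounds as [[He Hev] HvM].
  apply (convex_from_glue _ _ _ _ (dPhi M) (dPhi M)); try lra.
  - apply (convex_from_mono _ 0); [lra|apply convex_from_affine].
  - apply (convex_from_mono _ 0); [lra|exact HconvPhi].
  - unfold tangent_line. ring.
  - apply is_right_deriv_affine.
  - apply HdPhi, HM.
Qed.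

Lemma middle_part_convex : convex_from middle_part delta.
Proof.
  destruct tangency_point_bounds as [[He Hev] HvM].
  destruct bridge_constants_pos as [_ [_ Hc]].
  apply (convex_from_glue _ _ _ _ (dpower_piece tangency_point) (dPhi M)); try lra.
  - apply convex_from_scal; [apply Rlt_le, power_coef_pos|].
    apply convex_from_Rpower; [apply Hdelta|lra].
  - exact upper_part_convex.
  - unfold upper_part. rewrite glue_lt by exact HvM. apply power_piece_tangency.
  - apply is_right_deriv_Rpower. lra.
  - assert (Hd := upper_part_right_deriv tangency_point ltac:(lra)).
    rewrite glue_lt in Hd by exact HvM. exact Hd.
  - rewrite dpower_piece_tangency. lra.
Qed.

(* This is where [lquot Phi dPhi delta <= c] is needed. *)
Lemma scaled_deriv_le_dpower_delta : scale_coef * dPhi delta <= dpower_piece delta.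
Proof.
  destruct HPhi as [_ [_ [Hpos _]]]. assert (HPd := Hpos delta (proj1 Hdelta)).
  assert (E : scale_coef * dPhi delta
              = power_coef * Rpower delta (c - 1) * lquot Phi dPhi delta).
  { unfold scale_coef, power_piece, lquot.
    rewrite <- (Rpower_pred_mult delta c) by apply Hdelta. field. lra. }
  rewrite E. unfold dpower_piece.
  replace (power_coef * (c * Rpower delta (c - 1))) with (power_coef * Rpower delta (c - 1) * c)
    by ring.
  apply Rmult_le_compat_l; [|exact Hqdelta].
  apply Rlt_le, Rmult_lt_0_compat; [apply power_coef_pos|apply exp_pos].
Qed.

Lemma bridge_convex : convex_from bridge 0.
Proof.
  destruct HPhi as [HconvPhi _]. apply convex_from_of_convex in HconvPhi.
  apply (convex_from_glue _ _ _ _ (scale_coef * dPhi delta) (dpower_piece delta)).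
  - apply Hdelta.
  - apply convex_from_scal; [apply Rlt_le, scale_coef_pos|exact HconvPhi].
  - exact middle_part_convex.
  - rewrite scale_coef_delta. unfold middle_part. rewrite glue_lt by apply Hdelta. reflexivity.
  - apply is_right_deriv_scal, HdPhi, Hdelta.
  - assert (Hd := middle_part_right_deriv delta ltac:(apply Hdelta)).
    rewrite glue_lt in Hd by apply Hdelta. exact Hd.
  - exact scaled_deriv_le_dpower_delta.
Qed.

Lemma bridge_young : young bridge.
Proof.
  destruct HPhi as [_ [HPhi0 [Hpos Hgrow]]].
  destruct tangency_point_bounds as [[He Hev] HvM].
  destruct bridge_constants_pos as [HPM [HD Hc]].
  split; [|split; [|split]].
  - apply convex_of_convex_from, bridge_convex.
  - rewrite bridge_le_delta by (apply Rlt_le, Hdelta). rewrite HPhi0. ring.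
  - intros t Ht.
    destruct (Rle_dec t delta) as [Htd|Htd].
    { rewrite bridge_le_delta by exact Htd.
      apply Rmult_lt_0_compat; [apply scale_coef_pos|apply Hpos, Ht]. }
    destruct (Rlt_dec t tangency_point) as [Htv|Htv].
    { rewrite bridge_power by lra. apply power_piece_pos. }
    destruct (Rlt_dec t M) as [HtM|HtM]; [|rewrite bridge_above by lra; apply Hpos, Ht].
    rewrite bridge_tangent by lra.
    assert (Hv := power_piece_pos tangency_point). rewrite power_piece_tangency in Hv.
    unfold tangent_line in *. nra.
  - apply (filterlim_ext_loc Phi); [|exact Hgrow].
    exists M. intros t Ht. symmetry. apply bridge_above. lra.
Qed.

Lemma bridge_equiv : young_equiv Phi bridge.
Proof.
  destruct tangency_point_bounds as [_ HvM].
  apply (young_equiv_of_agree _ _ scale_coef delta M HPhi bridge_young scale_coef_pos).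
  - split; [apply Hdelta|lra].
  - intros t Ht. apply bridge_le_delta, Ht.
  - exact bridge_above.
Qed.

Lemma bridge_lquot_below (t : R) :
  0 < t < delta -> lquot bridge dbridge t = lquot Phi dPhi t.
Proof.
  destruct HPhi as [_ [_ [Hpos _]]]. intros Ht.
  assert (0 < Phi t) by apply Hpos, Ht. assert (Hk := scale_coef_pos).
  unfold lquot. rewrite bridge_le_delta by lra. unfold dbridge. rewrite glue_lt by lra.
  field. lra.
Qed.

Lemma bridge_lquot_above (t : R) : M <= t -> lquot bridge dbridge t = lquot Phi dPhi t.
Proof.
  destruct tangency_point_bounds as [_ HvM]. intros Ht.
  unfold lquot. rewrite bridge_above by exact Ht. unfold dbridge. rewrite !glue_ge by lra.
  reflexivity.
Qed.

Lemma bridge_lquot_middle (t : R) :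
  delta <= t < M -> lquot Phi dPhi M <= lquot bridge dbridge t <= c.
Proof.
  destruct tangency_point_bounds as [[He Hev] HvM].
  destruct bridge_constants_pos as [HPM [HD Hc]]. intros Ht.
  destruct (Rlt_dec t tangency_point) as [Htv|Htv].
  - assert (Hq : lquot bridge dbridge t = c).
    { unfold lquot. rewrite bridge_power by lra. unfold dbridge. rewrite glue_ge, !glue_lt by lra.
      assert (Hpc := power_coef_pos). assert (0 < Rpower t (c - 1)) by apply exp_pos.
      unfold power_piece, dpower_piece. rewrite <- (Rpower_pred_mult t c) by lra.
      field. repeat split; lra. }
    rewrite Hq. lra.
  - assert (HPMe : Phi M = dPhi M * (M - tangent_root)) by (unfold tangent_root; field; lra).
    assert (HT : tangent_line t = dPhi M * (t - tangent_root)) by (unfold tangent_line; lra).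
    assert (Hv : tangency_point * (c - 1) = c * tangent_root)
      by (unfold tangency_point; field; lra).
    unfold lquot. rewrite bridge_tangent by lra. unfold dbridge. rewrite !glue_ge, glue_lt by lra.
    rewrite HT, HPMe.
    replace (M * dPhi M / (dPhi M * (M - tangent_root))) with (M / (M - tangent_root))
      by (field; lra).
    replace (t * dPhi M / (dPhi M * (t - tangent_root))) with (t / (t - tangent_root))
      by (field; lra).
    (* [s / (s - tangent_root)] decreases from [c] at the tangency point *)
    split.
    + apply Rdiv_le_cross; nra.
    + apply Rle_div_l; nra.
Qed.

End Bridge.

Lemma young_linear_below (Phi dPhi : R -> R) (M : R) :
  young Phi -> is_right_deriv Phi M (dPhi M) -> 0 < M -> lquot Phi dPhi M <= 1 ->
  forall s, 0 <= s <= M -> Phi s = Phi M / M * s.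
Proof.
  intros HPhi HD HM Hq s Hs. pose proof HPhi as [Hconv [H0 [Hpos _]]].
  assert (HPM := Hpos M HM).
  apply Rle_antisym.
  - assert (Hlam : 0 <= s / M <= 1)
      by (split; [apply Rmult_le_pos; [lra|apply Rlt_le, Rinv_0_lt_compat; lra]|apply Rle_div_l; lra]).
    specialize (Hconv M 0 (s / M) ltac:(lra) ltac:(lra) Hlam).
    replace (s / M * M + (1 - s / M) * 0) with s in Hconv by (field; lra).
    rewrite H0 in Hconv. replace (Phi M / M * s) with (s / M * Phi M) by (field; lra). lra.
  - destruct (Req_dec s M) as [->|HsM]; [right; field; lra|].
    assert (Hchord := chord_le_right_deriv Phi 0 s M (dPhi M)
                        (convex_from_of_convex _ Hconv) ltac:(lra) HD).
    assert (HDM : dPhi M <= Phi M / M).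
    { unfold lquot in Hq. apply Rle_div_l in Hq; [|lra]. apply Rle_div_r; lra. }
    assert (dPhi M * (M - s) <= Phi M / M * (M - s)) by (apply Rmult_le_compat_r; lra).
    replace (Phi M / M * M) with (Phi M) in * by (field; lra).
    assert (Phi M / M * (M - s) = Phi M - Phi M / M * s) by (field; lra).
    lra.
Qed.

Lemma lquot_eq_1_below (Phi dPhi : R -> R) (M : R) :
  young Phi -> (forall t, 0 < t -> is_right_deriv Phi t (dPhi t)) -> 0 < M ->
  lquot Phi dPhi M <= 1 -> forall t, 0 < t < M -> lquot Phi dPhi t = 1.
Proof.
  intros HPhi HdPhi HM Hq t Ht.
  assert (Hlin := young_linear_below Phi dPhi M HPhi (HdPhi M HM) HM Hq).
  destruct HPhi as [_ [_ [Hpos _]]]. assert (HPM := Hpos M HM).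
  assert (Hslope : dPhi t = Phi M / M).
  { apply (is_right_deriv_unique Phi t); [apply HdPhi; lra|].
    apply (is_right_deriv_ext_loc (fun s => 0 + Phi M / M * (s - 0)) _ t _ (M - t)); [lra| |].
    - intros h Hh. rewrite (Hlin (t + h)) by lra. ring.
    - apply is_right_deriv_affine. }
  assert (0 < Phi M / M) by (apply Rdiv_lt_0_compat; lra).
  unfold lquot. rewrite Hslope, (Hlin t) by lra. field. lra.
Qed.

(** * Approximants with controlled exponents *)

Definition exponent_approximant (Phi : R -> R) (p0 pinf eta : R) (Psi dPsi : R -> R) : Prop :=
  young Psi /\ (forall t, 0 < t -> is_right_deriv Psi t (dPsi t)) /\ young_equiv Phi Psi /\
  filterlim (lquot Psi dPsi) (at_right 0) (locally p0) /\
  filterlim (lquot Psi dPsi) (Rbar_locally p_infty) (locally pinf) /\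
  (forall t, 0 < t -> Rmin p0 pinf - eta <= lquot Psi dPsi t <= Rmax p0 pinf + eta).

Section Approximation.
Variables (Phi dPhi : R -> R) (p0 pinf eta d0 M : R).
Hypothesis HPhi : young Phi.
Hypothesis HdPhi : forall t, 0 < t -> is_right_deriv Phi t (dPhi t).
Hypothesis H0 : filterlim (lquot Phi dPhi) (at_right 0) (locally p0).
Hypothesis Hinf : filterlim (lquot Phi dPhi) (Rbar_locally p_infty) (locally pinf).
Hypothesis Hd0 : 0 < d0.
Hypothesis HM : 0 < M.
Hypothesis Hnear0 : forall t, 0 < t < d0 -> Rabs (lquot Phi dPhi t - p0) < eta.
Hypothesis Hnearinf : forall t, M <= t -> Rabs (lquot Phi dPhi t - pinf) < eta.

Lemma linear_case_approximant :
  lquot Phi dPhi M <= 1 -> exponent_approximant Phi p0 pinf eta Phi dPhi.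
Proof.
  intros Hq. assert (Hone := lquot_eq_1_below Phi dPhi M HPhi HdPhi HM Hq).
  assert (Hp0 : Rabs (1 - p0) < eta).
  { assert (0 < Rmin d0 M) by (apply Rmin_glb_lt; lra).
    pose proof (Rmin_l d0 M). pose proof (Rmin_r d0 M).
    rewrite <- (Hone (Rmin d0 M / 2)) by lra. apply Hnear0. lra. }
  apply Rabs_lt_between in Hp0.
  pose proof (Rmin_l p0 pinf). pose proof (Rmin_r p0 pinf).
  pose proof (Rmax_l p0 pinf). pose proof (Rmax_r p0 pinf).
  split; [exact HPhi|split; [exact HdPhi|split; [apply young_equiv_refl, HPhi|]]].
  split; [exact H0|split; [exact Hinf|]].
  intros t Ht. destruct (Rlt_dec t M) as [HtM|HtM].
  - rewrite Hone by lra. lra.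
  - specialize (Hnearinf t ltac:(lra)). apply Rabs_lt_between in Hnearinf. lra.
Qed.

Lemma bridge_case_approximant :
  1 < lquot Phi dPhi M -> exists Psi dPsi, exponent_approximant Phi p0 pinf eta Psi dPsi.
Proof.
  intros Hq. set (c := Rmax p0 pinf + eta).
  pose proof (Rmin_l p0 pinf). pose proof (Rmin_r p0 pinf).
  pose proof (Rmax_l p0 pinf). pose proof (Rmax_r p0 pinf).
  assert (HqM : 1 < lquot Phi dPhi M < c).
  { split; [exact Hq|]. specialize (Hnearinf M ltac:(lra)).
    apply Rabs_lt_between in Hnearinf. unfold c. lra. }
  destruct (tangency_point_bounds Phi dPhi c M HPhi HM HqM) as [[He Hev] _].
  set (delta := Rmin d0 (tangency_point Phi dPhi c M) / 2).
  assert (Hdelta : 0 < delta < tangency_point Phi dPhi c M /\ delta < d0).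
  { assert (0 < Rmin d0 (tangency_point Phi dPhi c M)) by (apply Rmin_glb_lt; lra).
    pose proof (Rmin_l d0 (tangency_point Phi dPhi c M)).
    pose proof (Rmin_r d0 (tangency_point Phi dPhi c M)). unfold delta. lra. }
  destruct Hdelta as [Hdelta Hdd0].
  assert (Hqdelta : lquot Phi dPhi delta <= c).
  { specialize (Hnear0 delta ltac:(lra)). apply Rabs_lt_between in Hnear0. unfold c. lra. }
  exists (bridge Phi dPhi c M delta), (dbridge Phi dPhi c M delta).
  split; [apply bridge_young; assumption|].
  split; [intros t Ht; apply bridge_right_deriv; assumption|].
  split; [apply bridge_equiv; assumption|].
  split; [|split].
  - apply (filterlim_ext_loc (lquot Phi dPhi)); [|exact H0].
    apply (at_right_0_intro _ delta); [lra|]. intros t Ht.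
    symmetry. apply bridge_lquot_below; assumption.
  - apply (filterlim_ext_loc (lquot Phi dPhi)); [|exact Hinf].
    exists M. intros t Ht. symmetry. apply bridge_lquot_above; try assumption. lra.
  - intros t Ht. destruct (Rlt_dec t delta) as [Htd|Htd].
    { rewrite bridge_lquot_below by (assumption || lra).
      specialize (Hnear0 t ltac:(lra)). apply Rabs_lt_between in Hnear0. lra. }
    destruct (Rlt_dec t M) as [HtM|HtM].
    + assert (Hmid := bridge_lquot_middle Phi dPhi c M delta HPhi HM HqM Hdelta t ltac:(lra)).
      specialize (Hnearinf M ltac:(lra)). apply Rabs_lt_between in Hnearinf.
      change (Rmax p0 pinf + eta) with c. lra.
    + rewrite bridge_lquot_above by (assumption || lra).
      specialize (Hnearinf t ltac:(lra)). apply Rabs_lt_between in Hnearinf. lra.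
Qed.

End Approximation.

Theorem mainTheorem11 (Phi dPhi : R -> R) (p0 pinf : R)
  (HPhi : young Phi)
  (HdPhi : forall t, 0 < t -> is_right_deriv Phi t (dPhi t))
  (H0 : filterlim (lquot Phi dPhi) (at_right 0) (locally p0))
  (Hinf : filterlim (lquot Phi dPhi) (Rbar_locally p_infty) (locally pinf)) :
  forall eps, 0 < eps ->
  exists Psi dPsi : R -> R,
    young Psi /\
    (forall t, 0 < t -> is_right_deriv Psi t (dPsi t)) /\
    young_equiv Phi Psi /\
    Rbar_le (Rmax p0 pinf) (p_exp Psi dPsi) /\
    Rbar_lt (p_exp Psi dPsi) (Rmax p0 pinf + eps) /\
    Rbar_lt (Rmin p0 pinf - eps) (q_exp Psi dPsi) /\
    Rbar_le (q_exp Psi dPsi) (Rmin p0 pinf).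
Proof.
  intros eps Heps. set (eta := eps / 2). assert (Heta : 0 < eta < eps) by (unfold eta; lra).
  destruct (at_right_0_elim _ (proj1 (filterlim_locally_Rabs _ _ _ _) H0 eta (proj1 Heta)))
    as [d0 [Hd0 Hnear0]].
  destruct (proj1 (filterlim_locally_Rabs _ _ _ _) Hinf eta (proj1 Heta)) as [M0 HM0].
  set (M := Rmax M0 0 + 1).
  assert (HM : 0 < M) by (pose proof (Rmax_r M0 0); unfold M; lra).
  assert (Hnearinf : forall t, M <= t -> Rabs (lquot Phi dPhi t - pinf) < eta)
    by (intros t Ht; apply HM0; pose proof (Rmax_l M0 0); unfold M in Ht; lra).
  assert (Happrox : exists Psi dPsi, exponent_approximant Phi p0 pinf eta Psi dPsi).
  { destruct (Rle_lt_dec (lquot Phi dPhi M) 1) as [Hq|Hq].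
    - exists Phi, dPhi. apply (linear_case_approximant Phi dPhi p0 pinf eta d0 M); assumption.
    - apply (bridge_case_approximant Phi dPhi p0 pinf eta d0 M); assumption. }
  destruct Happrox as [Psi [dPsi [HY [HD [HE [L0 [Linf Hb]]]]]]].
  exists Psi, dPsi. split; [exact HY|split; [exact HD|split; [exact HE|]]].
  exact (exponent_bounds Psi dPsi p0 pinf eta eps Heta L0 Linf Hb).
Qed.
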